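(* Let $A\in\mathbb{C}^{p\times p}$ and $C\in\mathbb{C}^{q\times q}$ be Hermitian positive semidefinite, let $B\in\mathbb{C}^{p\times q}$, and let $H=\begin{bmatrix} A & B\\ B^* & -C\end{bmatrix}$. For every $t>0$, the null-space of $H$ coincides with the null-space of the matrix obtained from $H$ by replacing $A$ by $tA$; likewise for the matrix obtained by replacing $B$ by $tB$ (and $B^*$ by $tB^*$), and for the matrix obtained by replacing $C$ by $tC$. *)

From HB Require Import structures.
From mathcomp Require Import all_boot all_order all_algebra.
From mathcomp Require Import complex.
From mathcomp Require Import reals.
Set Implicit Arguments. Unset Strict Implicit. Unset Printing Implicit Defensive.
Import Order.TTheory GRing.Theory Num.Theory.
Local Open Scope ring_scope.

Definition ctrmx (R : realType) (m n : nat) (B : 'M[R[i]]_(m, n)) : 'M[R[i]]_(n, m) :=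
  (map_mx (@conjc R) B)^T.

Definition hermitian (R : realType) (n : nat) (A : 'M[R[i]]_n) : Prop :=
  ctrmx A = A.

(* positive semidefinite: x^* A x >= 0 for all x (in the order of C, which
   also forces x^* A x to be real) *)
Definition psd (R : realType) (n : nat) (A : 'M[R[i]]_n) : Prop :=
  forall x : 'cV[R[i]]_n, 0 <= (ctrmx x *m A *m x) 0 0.

Definition hermitian_psd (R : realType) (n : nat) (A : 'M[R[i]]_n) : Prop :=
  hermitian A /\ psd A.

Definition Hmat (R : realType) (p q : nat) (A : 'M[R[i]]_p) (B : 'M[R[i]]_(p, q))
  (C : 'M[R[i]]_q) : 'M[R[i]]_(p + q) :=
  block_mx A B (ctrmx B) (- C).

Definition nullspace (R : realType) (n : nat) (M : 'M[R[i]]_n) : 'cV[R[i]]_n -> Prop :=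
  fun x => M *m x = 0.

(* Write x = (u, v). If H x = 0 then u^* A u = - u^* B v and v^* C v = v^* B^* u
   is the conjugate of u^* B v, so u^* A u + v^* C v = 0. Both forms being
   nonnegative, they vanish, and for a Hermitian positive semidefinite matrix a
   vanishing form forces A u = 0 and C v = 0. Hence the null-space of H is
   described by A u = 0, B v = 0, B^* u = 0, C v = 0, a set of conditions that is
   invariant under multiplying A, B or C by a positive real. *)

From Pilot Require Import Defs.
From HB Require Import structures.
From mathcomp Require Import all_boot all_order all_algebra.
From mathcomp Require Import complex.
From mathcomp Require Import reals.
From mathcomp Require Import ring.

Set Implicit Arguments.
Unset Strict Implicit.
Unset Printing Implicit Defensive.

Import Order.TTheory GRing.Theory Num.Theory.
Local Open Scope ring_scope.

Lemma quadratic_ge0_eq0 (F : numFieldType) (n m : F) : 0 <= n -> 0 <= m ->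
  (forall s, 0 <= s -> 0 <= s ^+ 2 * m - 2 * s * n) -> n = 0.
Proof.
move=> n_ge0 m_ge0 quad_ge0.
have m1_gt0 : 0 < m + 1 by rewrite ltr_wpDl.
have m1_neq0 : m + 1 != 0 by rewrite gt_eqF.
have := quad_ge0 (n / (m + 1)) (divr_ge0 n_ge0 (ltW m1_gt0)).
have -> : (n / (m + 1)) ^+ 2 * m - 2 * (n / (m + 1)) * n
   = - (n ^+ 2 * (m + 2)) / (m + 1) ^+ 2 by field.
rewrite pmulr_lge0 ?invr_gt0 ?exprn_gt0 // oppr_ge0 => le0.
have : n ^+ 2 * (m + 2) == 0.
  by rewrite eq_le le0 mulr_ge0 ?exprn_ge0 ?addr_ge0 ?ler0n.
by rewrite mulf_eq0 sqrf_eq0 paddr_eq0 // pnatr_eq0 andbF orbF => /eqP.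
Qed.

Lemma scalemx_mul_eq0 (F : fieldType) m n k (a : F) (M : 'M[F]_(m, n))
    (w : 'M[F]_(n, k)) :
  a != 0 -> ((a *: M) *m w == 0) = (M *m w == 0).
Proof. by move=> a_neq0; rewrite -scalemxAl scaler_eq0 (negPf a_neq0). Qed.

Section ConjTranspose.

Variable R : realType.
Local Notation C := R[i].

Lemma ctrmx_mul m n k (X : 'M[C]_(m, n)) (Y : 'M[C]_(n, k)) :
  ctrmx (X *m Y) = ctrmx Y *m ctrmx X.
Proof. by rewrite /ctrmx map_mxM trmx_mul. Qed.

Lemma ctrmxD m n (X Y : 'M[C]_(m, n)) : ctrmx (X + Y) = ctrmx X + ctrmx Y.
Proof. by rewrite /ctrmx map_mxD linearD. Qed.

Lemma ctrmxN m n (X : 'M[C]_(m, n)) : ctrmx (- X) = - ctrmx X.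
Proof. by rewrite /ctrmx map_mxN linearN. Qed.

Lemma ctrmxZ m n (a : C) (X : 'M[C]_(m, n)) : ctrmx (a *: X) = (a^*)%C *: ctrmx X.
Proof. by rewrite /ctrmx map_mxZ linearZ. Qed.

Lemma ctrmxK m n (X : 'M[C]_(m, n)) : ctrmx (ctrmx X) = X.
Proof. by apply/matrixP => i j; rewrite /ctrmx !mxE conjcK. Qed.

Lemma ctrmx_scalar (X : 'M[C]_1) : ctrmx X 0 0 = ((X 0 0)^*)%C.
Proof. by rewrite /ctrmx !mxE. Qed.

Lemma cdotmx_ge0 n (y : 'cV[C]_n) : 0 <= (ctrmx y *m y) 0 0.
Proof. by rewrite mxE sumr_ge0 // => i _; rewrite /ctrmx !mxE mulrC mul_conjC_ge0. Qed.

Lemma cdotmx_eq0 n (y : 'cV[C]_n) : (ctrmx y *m y) 0 0 = 0 -> y = 0.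
Proof.
rewrite mxE => /eqP; rewrite psumr_eq0 => [/allP y0|i _]; last first.
  by rewrite /ctrmx !mxE mulrC mul_conjC_ge0.
apply/matrixP => i j; rewrite (ord1 j) mxE.
have /implyP/(_ isT) := y0 i (mem_index_enum _).
by rewrite /ctrmx !mxE mulrC mul_conjC_eq0 => /eqP.
Qed.

End ConjTranspose.

Section HermitianPsd.

Variable R : realType.
Local Notation C := R[i].
Local Notation form A x := ((ctrmx x *m A *m x) 0 0).

(* Expanding the form at u - s A u and letting s -> 0+ shows (A u)^* (A u) = 0. *)
Lemma psd_form_eq0 n (A : 'M[C]_n) (u : 'cV[C]_n) :
  hermitian_psd A -> form A u = 0 -> A *m u = 0.
Proof.
move=> [hermA psdA] Au0; apply: cdotmx_eq0.
set y := A *m u.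
have ctr_y : ctrmx y = ctrmx u *m A by rewrite /y ctrmx_mul hermA.
have form_shift s : 0 <= s -> form A (u - s *: y)
    = form A u - 2 * s * (ctrmx y *m y) 0 0 + s ^+ 2 * form A y.
  move=> s_ge0; have conj_s : (s^*)%C = s by exact: conj_Creal (ger0_real s_ge0).
  rewrite ctrmxD ctrmxN ctrmxZ conj_s ctr_y /y.
  rewrite !(mulmxDl, mulmxDr, mulNmx, mulmxN) -!scalemxAl -!scalemxAr !mulmxA.
  set uAu := ctrmx u *m A *m u; set uAAu := ctrmx u *m A *m A *m u.
  set uAAAu := ctrmx u *m A *m A *m A *m u.
  by clearbody uAu uAAu uAAAu; rewrite !mxE; ring.
apply: (@quadratic_ge0_eq0 _ _ (form A y)) => [||s s_ge0].
- exact: cdotmx_ge0.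
- exact: psdA.
- by have := psdA (u - s *: y); rewrite form_shift // Au0 add0r addrC.
Qed.

Lemma hermitian_psd_scale n (t : R) (A : 'M[C]_n) : 0 < t ->
  hermitian_psd A -> hermitian_psd ((t%:C)%C *: A).
Proof.
move=> t_gt0 [hermA psdA]; split; first by rewrite /Defs.hermitian ctrmxZ conjc_real hermA.
move=> x; rewrite -scalemxAr scalemxAl -!scalemxAl mxE.
by rewrite mulr_ge0 // lecE /= eqxx ltW.
Qed.

Lemma nullspace_HmatP p q (A : 'M[C]_p) (B : 'M[C]_(p, q)) (D : 'M[C]_q) x :
  hermitian_psd A -> hermitian_psd D ->
  nullspace (Hmat A B D) x <->
  [&& A *m usubmx x == 0, B *m dsubmx x == 0,
      ctrmx B *m usubmx x == 0 & D *m dsubmx x == 0].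
Proof.
move=> hpsdA hpsdD.
rewrite /nullspace /Hmat -{1}[x]vsubmxK mul_block_col mulNmx.
set u := usubmx x; set v := dsubmx x.
split=> [/eqP|/and4P[/eqP-> /eqP-> /eqP-> /eqP->]]; last first.
  by rewrite !(addr0, oppr0) col_mx0.
rewrite col_mx_eq0 => /andP[/eqP top0 /eqP bot0].
have formA : ctrmx u *m A *m u = - (ctrmx u *m B *m v).
  by apply/eqP; rewrite -addr_eq0 -!mulmxA -mulmxDr top0 mulmx0.
have formD : ctrmx v *m D *m v = ctrmx (ctrmx u *m B *m v).
  apply/eqP; rewrite !ctrmx_mul ctrmxK -subr_eq0 -!mulmxA -mulmxBr.
  by rewrite -opprB bot0 oppr0 mulmx0.
have formA_ge0 : 0 <= form A u by case: hpsdA.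
have formD_ge0 : 0 <= form D v by case: hpsdD.
have formAD : form A u + form D v = 0.
  have uBv : (ctrmx u *m B *m v) 0 0 = - form A u by rewrite formA [in RHS]mxE opprK.
  rewrite formD ctrmx_scalar uBv rmorphN.
  by rewrite [X in _ - X](conj_Creal (ger0_real formA_ge0)) subrr.
move/eqP: formAD; rewrite paddr_eq0 // => /andP[/eqP formA0 /eqP formD0].
have Au0 := psd_form_eq0 hpsdA formA0; have Dv0 := psd_form_eq0 hpsdD formD0.
by move: top0 bot0; rewrite Au0 Dv0 add0r oppr0 addr0 => -> ->; rewrite !eqxx.
Qed.

End HermitianPsd.

Theorem corollary2p3 (R : realType) (p q : nat)
  (A : 'M[R[i]]_p) (B : 'M[R[i]]_(p, q)) (C : 'M[R[i]]_q) :
  hermitian_psd A -> hermitian_psd C ->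
  forall t : R, 0 < t ->
    (forall x, nullspace (Hmat A B C) x <-> nullspace (Hmat ((t%:C)%C *: A) B C) x) /\
    (forall x, nullspace (Hmat A B C) x <-> nullspace (Hmat A ((t%:C)%C *: B) C) x) /\
    (forall x, nullspace (Hmat A B C) x <-> nullspace (Hmat A B ((t%:C)%C *: C)) x).
Proof.
move=> hpsdA hpsdC t t_gt0.
have tA := hermitian_psd_scale t_gt0 hpsdA; have tC := hermitian_psd_scale t_gt0 hpsdC.
have t_neq0 : (t%:C)%C != 0 :> R[i] by rewrite eq_complex /= eqxx andbT gt_eqF.
have scale_eq0 := scalemx_mul_eq0 _ _ t_neq0.
split; [|split] => x; rewrite (nullspace_HmatP _ _ hpsdA hpsdC).
- by rewrite (nullspace_HmatP _ _ tA hpsdC) scale_eq0.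
- by rewrite (nullspace_HmatP _ _ hpsdA hpsdC) ctrmxZ conjc_real !scale_eq0.
- by rewrite (nullspace_HmatP _ _ hpsdA tC) scale_eq0.
Qed.
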